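(* For $n=0,1,2,\ldots$ let $R_n=\sum_{k=0}^n\binom{n}{k}\binom{n+k}{k}\frac{1}{2k-1}$. Then $\lim_{n\to\infty}\frac{R_{n+1}}{R_n}=3+2\sqrt{2}$. *)

From Stdlib Require Import Reals.
From Coquelicot Require Import Coquelicot.
Open Scope R_scope.

(* R_n = sum_{k=0}^n C(n,k) C(n+k,k) / (2k-1), computed in the reals
   (so the k = 0 term is -1). *)
Definition Rseq (n : nat) : R :=
  sum_f_R0 (fun k => Binomial.C n k * Binomial.C (n + k) k / (2 * INR k - 1)) n.

From Stdlib Require Import Reals Factorial Arith Lra Lia.
From Coquelicot Require Import Coquelicot.
Open Scope R_scope.

(* Compare R_n with the central Delannoy numbers D_n = sum_k C(n,k) C(n+k,k).
   Since C(n+1,k) C(n+1+k,k) (n+1-k) = C(n,k) C(n+k,k) (n+1+k), summing termwise gives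
     (2n+1) R_{n+1} = (2n+3) R_n + D_{n+1} + D_n   and
     (n+2) D_{n+2} + (n+1) D_n = 3 (2n+3) D_{n+1}.
   The second makes rho_n = D_{n+1} / D_n satisfy rho_{n+1} = 6 - 1/rho_n + O(1/n), a
   contraction near its fixed point lambda = 3 + 2 sqrt 2; the first then makes
   s_n = (2n+1) R_n / D_n satisfy s_{n+1} = (s_n + lambda + 1) / lambda + o(1), a
   contraction with fixed point sqrt 2. Finally
   R_{n+1} / R_n = (s_{n+1} / s_n) rho_n (2n+1) / (2n+3) tends to lambda. *)

(* [C(n,k) C(n+k,k)] for [k <= n]. The guard makes it vanish beyond, which
   [Binomial.C] does not: its [n - k] is truncated. *)
Definition delannoy_term (n k : nat) : R :=
  if Nat.leb k n then INR (fact (n + k)) / (INR (fact k) ^ 2 * INR (fact (n - k)))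
  else 0.

Lemma delannoy_term_le n k : (k <= n)%nat ->
  delannoy_term n k = INR (fact (n + k)) / (INR (fact k) ^ 2 * INR (fact (n - k))).
Proof. intro Hk. unfold delannoy_term. apply Nat.leb_le in Hk. now rewrite Hk. Qed.

Lemma delannoy_term_gt n k : (n < k)%nat -> delannoy_term n k = 0.
Proof. intro Hk. unfold delannoy_term. apply Nat.leb_gt in Hk. now rewrite Hk. Qed.

Lemma INR_fact_S m : INR (fact (S m)) = (INR m + 1) * INR (fact m).
Proof. now rewrite fact_simpl, mult_INR, S_INR. Qed.

Lemma C_mul_C_delannoy_term n k : (k <= n)%nat ->
  Binomial.C n k * Binomial.C (n + k) k = delannoy_term n k.
Proof.
  intro Hk. rewrite delannoy_term_le by exact Hk. unfold Binomial.C.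
  replace (n + k - k)%nat with n by lia.
  pose proof (INR_fact_neq_0 n). pose proof (INR_fact_neq_0 k).
  pose proof (INR_fact_neq_0 (n - k)).
  field. auto.
Qed.

Lemma delannoy_term_0 n : delannoy_term n 0 = 1.
Proof.
  rewrite delannoy_term_le by lia. rewrite Nat.add_0_r, Nat.sub_0_r. simpl.
  pose proof (INR_fact_neq_0 n) as Hn. field. exact Hn.
Qed.

Lemma delannoy_term_succ_n n k : (k <= n)%nat ->
  (INR n + 1 - INR k) * delannoy_term (S n) k = (INR n + 1 + INR k) * delannoy_term n k.
Proof.
  intro Hk. rewrite !delannoy_term_le by lia.
  replace (S n - k)%nat with (S (n - k)) by lia.
  replace (S n + k)%nat with (S (n + k)) by lia.
  rewrite !INR_fact_S, plus_INR, minus_INR by exact Hk.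
  pose proof (INR_fact_lt_0 (n + k)). pose proof (INR_fact_lt_0 k).
  pose proof (INR_fact_lt_0 (n - k)). pose proof (le_INR _ _ Hk).
  field. lra.
Qed.

Lemma delannoy_term_succ_k n k : (k < n)%nat ->
  (INR k + 1) ^ 2 * delannoy_term n (S k)
  = (INR n - INR k) * (INR n + INR k + 1) * delannoy_term n k.
Proof.
  intro Hk. rewrite !delannoy_term_le by lia.
  replace (n - k)%nat with (S (n - S k)) by lia.
  replace (n + S k)%nat with (S (n + k)) by lia.
  rewrite !INR_fact_S, plus_INR, minus_INR by lia. rewrite S_INR.
  pose proof (INR_fact_lt_0 (n + k)). pose proof (INR_fact_lt_0 k).
  pose proof (INR_fact_lt_0 (n - S k)). pose proof (pos_INR k).
  assert (INR k + 1 <= INR n) by (rewrite <- S_INR; apply le_INR; exact Hk).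
  field. lra.
Qed.

Lemma eq_div_mul_of_mul_eq (a b x y : R) : a <> 0 -> a * y = b * x -> y = b / a * x.
Proof. intros Ha H. apply Rmult_eq_reg_l with a; [|exact Ha]. rewrite H. field. exact Ha. Qed.

Lemma delannoy_term_rec_le n k : (k <= n)%nat ->
  (INR n + 2) * delannoy_term (S (S n)) (S k) + (INR n + 1) * delannoy_term n (S k)
  = (2 * INR n + 3) * (delannoy_term (S n) (S k) + 2 * delannoy_term (S n) k).
Proof.
  intro Hkn. pose proof (pos_INR n). pose proof (pos_INR k).
  assert (Hk : INR k <= INR n) by (apply le_INR; exact Hkn).
  set (X := delannoy_term n k).
  assert (HY : delannoy_term n (S k)
               = (INR n - INR k) * (INR n + INR k + 1) / (INR k + 1) ^ 2 * X).
  { apply eq_div_mul_of_mul_eq; [apply pow_nonzero; lra|].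
    destruct (Nat.eq_dec k n) as [-> | Hne].
    - rewrite delannoy_term_gt by lia. ring.
    - apply delannoy_term_succ_k. lia. }
  assert (HZ : delannoy_term (S n) k = (INR n + 1 + INR k) / (INR n + 1 - INR k) * X).
  { apply eq_div_mul_of_mul_eq; [lra|]. now apply delannoy_term_succ_n. }
  assert (HW : delannoy_term (S n) (S k)
               = (INR (S n) - INR k) * (INR (S n) + INR k + 1) / (INR k + 1) ^ 2
                 * delannoy_term (S n) k).
  { apply eq_div_mul_of_mul_eq; [apply pow_nonzero; lra|].
    apply delannoy_term_succ_k. lia. }
  assert (HV : delannoy_term (S (S n)) (S k)
               = (INR (S n) + 1 + INR (S k)) / (INR (S n) + 1 - INR (S k))
                 * delannoy_term (S n) (S k)).
  { apply eq_div_mul_of_mul_eq; [rewrite !S_INR; lra|].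
    apply delannoy_term_succ_n. lia. }
  rewrite HV, HW, HY, HZ, !S_INR. field. lra.
Qed.

Lemma delannoy_term_diag_succ n :
  (INR n + 2) * delannoy_term (S (S n)) (S (S n))
  = 2 * (2 * INR n + 3) * delannoy_term (S n) (S n).
Proof.
  rewrite !delannoy_term_le, !Nat.sub_diag by lia.
  replace (S (S n) + S (S n))%nat with (S (S (S n + S n))) by lia.
  rewrite !INR_fact_S. simpl (fact 0). rewrite INR_1, !S_INR, plus_INR, !S_INR.
  pose proof (INR_fact_lt_0 (S n + S n)). pose proof (INR_fact_lt_0 n).
  pose proof (pos_INR n).
  field. lra.
Qed.

Lemma delannoy_term_rec n k :
  (INR n + 2) * delannoy_term (S (S n)) (S k) + (INR n + 1) * delannoy_term n (S k)
  = (2 * INR n + 3) * (delannoy_term (S n) (S k) + 2 * delannoy_term (S n) k).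
Proof.
  destruct (le_lt_dec k n) as [Hkn | Hnk]; [now apply delannoy_term_rec_le|].
  destruct (Nat.eq_dec k (S n)) as [-> | Hne].
  - rewrite (delannoy_term_gt n), (delannoy_term_gt (S n) (S (S n))) by lia.
    rewrite delannoy_term_diag_succ. ring.
  - rewrite !delannoy_term_gt by lia. ring.
Qed.

Definition delannoy (n : nat) : R := sum_f_R0 (delannoy_term n) n.

Lemma delannoy_sum_ext n N : (n <= N)%nat -> sum_f_R0 (delannoy_term n) N = delannoy n.
Proof.
  intro H. induction H as [|N HN IH]; [reflexivity|].
  rewrite tech5, IH, delannoy_term_gt by lia. ring.
Qed.

Lemma delannoy_sum_shift m N : (m <= S N)%nat ->
  sum_f_R0 (fun k => delannoy_term m (S k)) N = delannoy m - 1.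
Proof.
  intro H. rewrite <- (delannoy_sum_ext m (S N) H), (decomp_sum _ (S N)) by lia.
  rewrite delannoy_term_0. simpl pred. ring.
Qed.

Lemma delannoy_rec n :
  (INR n + 2) * delannoy (S (S n)) + (INR n + 1) * delannoy n
  = 3 * (2 * INR n + 3) * delannoy (S n).
Proof.
  assert (Hsum :
    sum_f_R0 (fun k => delannoy_term (S (S n)) (S k) * (INR n + 2)
                       + delannoy_term n (S k) * (INR n + 1)) (S n)
    = sum_f_R0 (fun k => delannoy_term (S n) (S k) * (2 * INR n + 3)
                         + delannoy_term (S n) k * (2 * (2 * INR n + 3))) (S n)).
  { apply sum_eq. intros k _. pose proof (delannoy_term_rec n k). lra. }
  rewrite !plus_sum, <- !scal_sum, !delannoy_sum_shift, delannoy_sum_ext in Hsum by lia.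
  nra.
Qed.

Lemma Rseq_delannoy_term n :
  Rseq n = sum_f_R0 (fun k => delannoy_term n k / (2 * INR k - 1)) n.
Proof.
  apply sum_eq. intros k Hk. now rewrite C_mul_C_delannoy_term.
Qed.

Lemma odd_INR_neq_0 k : 2 * INR k - 1 <> 0.
Proof.
  destruct k as [|k]; [simpl; lra|]. rewrite S_INR. pose proof (pos_INR k). lra.
Qed.

Lemma Rseq_rec n :
  (2 * INR n + 1) * Rseq (S n) = (2 * INR n + 3) * Rseq n + delannoy (S n) + delannoy n.
Proof.
  rewrite !Rseq_delannoy_term. unfold delannoy. rewrite !tech5, Rmult_plus_distr_l, !scal_sum.
  assert (Hterm :
    sum_f_R0 (fun k => delannoy_term (S n) k / (2 * INR k - 1) * (2 * INR n + 1)) n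
    = sum_f_R0 (fun k => delannoy_term n k / (2 * INR k - 1) * (2 * INR n + 3)
                         + (delannoy_term (S n) k + delannoy_term n k)) n).
  { apply sum_eq. intros k Hk. pose proof (delannoy_term_succ_n n k Hk).
    pose proof (odd_INR_neq_0 k).
    apply Rmult_eq_reg_r with (2 * INR k - 1); [|assumption].
    field_simplify; [|assumption..]. lra. }
  rewrite Hterm, !plus_sum, S_INR. field. pose proof (pos_INR n). lra.
Qed.

Lemma contraction_iter (e : nat -> R) (c delta : R) (M : nat) :
  0 <= c < 1 -> 0 <= delta ->
  (forall n, (M <= n)%nat -> e (S n) <= c * e n + delta) ->
  forall j, e (M + j)%nat <= c ^ j * e M + delta / (1 - c).
Proof.
  intros Hc Hdelta Hrec. induction j as [|j IH].
  - rewrite Nat.add_0_r. assert (0 <= delta / (1 - c)) by (apply Rdiv_le_0_compat; lra).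
    simpl. lra.
  - rewrite Nat.add_succ_r. eapply Rle_trans; [apply Hrec; lia|].
    apply Rmult_le_compat_l with (r := c) in IH; [|lra].
    replace (c ^ S j * e M + delta / (1 - c))
      with (c * (c ^ j * e M + delta / (1 - c)) + delta) by (simpl; field; lra).
    lra.
Qed.

Lemma is_lim_seq_contraction (x d : nat -> R) (l c : R) (N : nat) :
  0 <= c < 1 ->
  (forall n, (N <= n)%nat -> Rabs (x (S n) - l) <= c * Rabs (x n - l) + d n) ->
  is_lim_seq d 0 -> is_lim_seq x l.
Proof.
  intros Hc Hrec Hd. apply is_lim_seq_Reals. apply is_lim_seq_Reals in Hd.
  intros eps Heps.
  assert (Hdelta : 0 < eps * (1 - c) / 2) by (apply Rdiv_lt_0_compat; nra).
  destruct (Hd _ Hdelta) as [M0 HM0].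
  set (M := max N M0). set (E := Rabs (x M - l)).
  assert (Hiter := contraction_iter (fun n => Rabs (x n - l)) c _ M Hc (Rlt_le _ _ Hdelta)).
  simpl in Hiter. fold E in Hiter.
  replace (eps * (1 - c) / 2 / (1 - c)) with (eps / 2) in Hiter by (field; lra).
  assert (HE : 0 <= E) by apply Rabs_pos.
  destruct (pow_lt_1_zero c ltac:(rewrite Rabs_pos_eq; lra) (eps / (2 * (E + 1))))
    as [J HJ]; [apply Rdiv_lt_0_compat; lra|].
  exists (M + J)%nat. intros n Hn. unfold R_dist.
  replace n with (M + (n - M))%nat by lia.
  eapply Rle_lt_trans.
  - apply Hiter. intros m Hm. eapply Rle_trans; [apply Hrec; lia|].
    apply Rplus_le_compat_l. eapply Rle_trans; [apply Rle_abs|].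
    specialize (HM0 m ltac:(lia)). unfold R_dist in HM0. rewrite Rminus_0_r in HM0. lra.
  - specialize (HJ (n - M)%nat ltac:(lia)). rewrite Rabs_pos_eq in HJ by (apply pow_le; lra).
    assert (c ^ (n - M) * E <= eps / (2 * (E + 1)) * E) by (apply Rmult_le_compat_r; lra).
    assert (eps / (2 * (E + 1)) * E < eps / 2).
    { apply Rmult_lt_reg_r with (2 * (E + 1)); [lra|]. field_simplify; nra. }
    lra.
Qed.

Lemma is_lim_seq_affine_rec (x a b : nat -> R) (la lb l c : R) (N : nat) :
  0 <= c < 1 -> (forall n, (N <= n)%nat -> Rabs (a n) <= c) ->
  (forall n, x (S n) = a n * x n + b n) ->
  is_lim_seq a la -> is_lim_seq b lb -> la * l + lb = l ->
  is_lim_seq x l.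
Proof.
  intros Hc Ha Hrec Hla Hlb Hfix.
  apply (is_lim_seq_contraction x (fun n => Rabs (a n * l + b n - l)) l c N Hc).
  - intros n Hn. rewrite Hrec.
    replace (a n * x n + b n - l) with (a n * (x n - l) + (a n * l + b n - l)) by ring.
    eapply Rle_trans; [apply Rabs_triang|]. apply Rplus_le_compat_r.
    rewrite Rabs_mult. apply Rmult_le_compat_r; [apply Rabs_pos|auto].
  - replace 0 with (Rabs (la * l + lb - l)) by (rewrite Hfix, Rminus_diag; apply Rabs_R0).
    apply (is_lim_seq_abs _ (la * l + lb - l)).
    apply is_lim_seq_minus'; [|apply is_lim_seq_const].
    apply is_lim_seq_plus'; [|exact Hlb].
    apply is_lim_seq_mult'; [exact Hla|apply is_lim_seq_const].
Qed.

Lemma is_lim_seq_div_INR_plus (a c : R) : 0 < a -> is_lim_seq (fun n => c / (INR n + a)) 0.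
Proof.
  intro Ha.
  assert (Hinf : is_lim_seq (fun n => INR n + a) p_infty).
  { eapply is_lim_seq_plus; [apply is_lim_seq_INR|apply is_lim_seq_const|constructor]. }
  apply is_lim_seq_inv in Hinf; [|discriminate].
  apply (is_lim_seq_scal_l _ c) in Hinf. simpl in Hinf. rewrite Rmult_0_r in Hinf.
  exact Hinf.
Qed.

Lemma delannoy_pos_triple_le n : 0 < delannoy n /\ 3 * delannoy n <= delannoy (S n).
Proof.
  induction n as [|n [Hpos Hge]].
  - assert (H0 : delannoy 0 = 1) by apply delannoy_term_0.
    assert (H1 : delannoy 1 = 3).
    { unfold delannoy. simpl. rewrite delannoy_term_0, delannoy_term_le by lia.
      simpl. field. }
    lra.
  - split; [lra|].
    pose proof (delannoy_rec n). pose proof (pos_INR n).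
    assert (Hstep : (INR n + 2) * (delannoy (S (S n)) - 3 * delannoy (S n))
                    = (INR n + 1) * (3 * delannoy (S n) - delannoy n)) by lra.
    assert (0 <= (INR n + 1) * (3 * delannoy (S n) - delannoy n))
      by (apply Rmult_le_pos; lra).
    nra.
Qed.

Definition delannoy_ratio (n : nat) : R := delannoy (S n) / delannoy n.

Definition silver_sq : R := 3 + 2 * sqrt 2.

Lemma silver_sq_fixpoint : silver_sq * silver_sq = 6 * silver_sq - 1 /\ 5 < silver_sq.
Proof.
  pose proof (sqrt_sqrt 2 ltac:(lra)). pose proof (sqrt_pos 2).
  unfold silver_sq. split; nra.
Qed.

Lemma delannoy_ratio_ge_3 n : 3 <= delannoy_ratio n.
Proof.
  destruct (delannoy_pos_triple_le n). unfold delannoy_ratio.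
  apply Rmult_le_reg_r with (delannoy n); [assumption|]. field_simplify; lra.
Qed.

Lemma delannoy_ratio_rec n :
  delannoy_ratio (S n)
  = 6 - / delannoy_ratio n + (/ delannoy_ratio n - 3) / (INR n + 2).
Proof.
  unfold delannoy_ratio. destruct (delannoy_pos_triple_le n) as [Hn _].
  destruct (delannoy_pos_triple_le (S n)) as [HSn _].
  pose proof (delannoy_rec n). pose proof (pos_INR n).
  apply Rmult_eq_reg_r with (delannoy (S n) * (INR n + 2)); [|nra].
  field_simplify; lra.
Qed.

Lemma delannoy_ratio_lim : is_lim_seq delannoy_ratio silver_sq.
Proof.
  destruct silver_sq_fixpoint as [Hfix Hgt].
  apply (is_lim_seq_contraction _ (fun n => 3 / (INR n + 2)) silver_sq (1/15) 0).
  - lra.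
  - intros n _. rewrite delannoy_ratio_rec.
    pose proof (delannoy_ratio_ge_3 n). pose proof (pos_INR n).
    set (r := delannoy_ratio n) in *.
    assert (Hinv : 6 - silver_sq = / silver_sq)
      by (apply Rmult_eq_reg_r with silver_sq; [field_simplify|]; lra).
    replace (6 - / r + (/ r - 3) / (INR n + 2) - silver_sq)
      with ((6 - silver_sq) - / r + (/ r - 3) / (INR n + 2)) by ring.
    rewrite Hinv.
    replace (/ silver_sq - / r) with ((r - silver_sq) / (r * silver_sq)) by (field; lra).
    eapply Rle_trans; [apply Rabs_triang|]. apply Rplus_le_compat.
    + unfold Rdiv. rewrite Rabs_mult, Rabs_inv, (Rabs_pos_eq (r * silver_sq)) by nra.
      rewrite Rmult_comm. apply Rmult_le_compat_r; [apply Rabs_pos|].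
      rewrite Rmult_1_l. apply Rinv_le_contravar; nra.
    + assert (Hpos : 0 < / (INR n + 2)) by (apply Rinv_0_lt_compat; lra).
      unfold Rdiv. rewrite Rabs_mult, (Rabs_pos_eq (/ (INR n + 2))) by lra.
      apply Rmult_le_compat_r; [lra|].
      assert (0 < / r <= / 3)
        by (split; [apply Rinv_0_lt_compat|apply Rinv_le_contravar]; lra).
      apply Rabs_le. lra.
  - apply is_lim_seq_div_INR_plus. lra.
Qed.

Definition scaled_Rseq (n : nat) : R := (2 * INR n + 1) * Rseq n / delannoy n.

Definition odd_ratio (n : nat) : R := (2 * INR n + 3) / (2 * INR n + 1).

Lemma scaled_Rseq_rec n :
  scaled_Rseq (S n)
  = odd_ratio n * odd_ratio n / delannoy_ratio n * scaled_Rseq n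
    + odd_ratio n * (1 + / delannoy_ratio n).
Proof.
  unfold scaled_Rseq, odd_ratio, delannoy_ratio.
  destruct (delannoy_pos_triple_le n) as [Hn _]. destruct (delannoy_pos_triple_le (S n)) as [HSn _].
  pose proof (Rseq_rec n) as Hrec. pose proof (pos_INR n).
  rewrite S_INR. replace (2 * (INR n + 1) + 1) with (2 * INR n + 3) by ring.
  apply Rmult_eq_reg_r with ((2 * INR n + 1) * delannoy (S n)); [|nra].
  field_simplify; [|lra..]. nra.
Qed.

Lemma odd_ratio_lim : is_lim_seq odd_ratio 1.
Proof.
  pose proof (is_lim_seq_div_INR_plus (1 / 2) 1 ltac:(lra)) as H.
  apply (is_lim_seq_plus' (fun _ => 1) _ 1) in H; [|apply is_lim_seq_const].
  rewrite Rplus_0_r in H. revert H. apply is_lim_seq_ext.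
  intro n. unfold odd_ratio. pose proof (pos_INR n). field. lra.
Qed.

Lemma odd_ratio_le n : (1 <= n)%nat -> 0 <= odd_ratio n <= 5 / 3.
Proof.
  intro Hn. apply le_INR in Hn. simpl in Hn. unfold odd_ratio. split.
  - apply Rdiv_le_0_compat; lra.
  - apply Rmult_le_reg_r with (2 * INR n + 1); [lra|]. field_simplify; lra.
Qed.

Lemma scaled_Rseq_lim : is_lim_seq scaled_Rseq (sqrt 2).
Proof.
  destruct silver_sq_fixpoint as [_ Hgt].
  pose proof (sqrt_sqrt 2 ltac:(lra)). pose proof (sqrt_pos 2).
  assert (Hinv := is_lim_seq_inv _ _ delannoy_ratio_lim
                    ltac:(intro E; injection E; lra)).
  simpl in Hinv.
  apply (is_lim_seq_affine_rec scaled_Rseq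
           (fun n => odd_ratio n * odd_ratio n / delannoy_ratio n)
           (fun n => odd_ratio n * (1 + / delannoy_ratio n))
           (1 * 1 * / silver_sq) (1 * (1 + / silver_sq)) (sqrt 2) (25 / 27) 1).
  - lra.
  - intros n Hn. pose proof (odd_ratio_le n Hn). pose proof (delannoy_ratio_ge_3 n).
    assert (0 < / delannoy_ratio n <= / 3)
      by (split; [apply Rinv_0_lt_compat|apply Rinv_le_contravar]; lra).
    unfold Rdiv. rewrite Rabs_pos_eq by (apply Rmult_le_pos; nra).
    assert (odd_ratio n * odd_ratio n <= 25 / 9) by nra. nra.
  - apply scaled_Rseq_rec.
  - apply is_lim_seq_mult'; [apply is_lim_seq_mult'; apply odd_ratio_lim|exact Hinv].
  - apply is_lim_seq_mult'; [apply odd_ratio_lim|].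
    apply is_lim_seq_plus'; [apply is_lim_seq_const|exact Hinv].
  - apply Rmult_eq_reg_r with silver_sq; [|lra].
    field_simplify; [|lra]. unfold silver_sq. nra.
Qed.

Lemma Rseq_ratio_eq n :
  Rseq (S n) / Rseq n
  = scaled_Rseq (S n) / scaled_Rseq n * delannoy_ratio n / odd_ratio n.
Proof.
  unfold scaled_Rseq, delannoy_ratio, odd_ratio.
  destruct (delannoy_pos_triple_le n) as [Hn _]. destruct (delannoy_pos_triple_le (S n)) as [HSn _].
  pose proof (pos_INR n). rewrite S_INR.
  destruct (Req_dec (Rseq n) 0) as [Hz | Hz].
  (* Division by 0 is 0 in [R], so both sides vanish. *)
  - rewrite Hz. unfold Rdiv. rewrite !Rmult_0_r, Rmult_0_l, Rinv_0, !Rmult_0_r, !Rmult_0_l.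
    reflexivity.
  - field. repeat split; lra.
Qed.

Theorem theorem4p2 :
  is_lim_seq (fun n : nat => Rseq (S n) / Rseq n) (3 + 2 * sqrt 2).
Proof.
  pose proof (sqrt_lt_R0 2 ltac:(lra)).
  apply (is_lim_seq_ext _ _ _ (fun n => eq_sym (Rseq_ratio_eq n))).
  replace (3 + 2 * sqrt 2) with (sqrt 2 / sqrt 2 * silver_sq / 1)
    by (unfold silver_sq; field; lra).
  apply is_lim_seq_div'; [|apply odd_ratio_lim|lra].
  apply is_lim_seq_mult'; [|apply delannoy_ratio_lim].
  apply is_lim_seq_div'; [apply (is_lim_seq_incr_1 scaled_Rseq)|..];
    [apply scaled_Rseq_lim..|lra].
Qed.
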